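(* Let $\alpha\in(0,1)$, $R>0$, and for $\lambda\in[-\pi,\pi]$ let $V(\lambda)$ denote the maximal Phase-II observation time when at the contact time $t_2$ the target is on the boundary of the observation disk with relative bearing $\lambda$. Then $V$ is monotonically non-decreasing on $[-\pi,0]$, monotonically non-increasing on $[0,\pi]$, and attains its maximum at $\lambda=0$.
   Context: Target: position $(0,y_T(t))$, $\dot y_T=1$. Observer: position $(x_O(t),y_O(t))$, $\dot x_O=\alpha\cos\psi(t)$, $\dot y_O=\alpha\sin\psi(t)$, heading $\psi$ a measurable control. Contact with bearing $\lambda$ at time $t_2$ means $\big(x_O(t_2),y_O(t_2)-y_T(t_2)\big)=R(\sin\lambda,\cos\lambda)$. For a control on $[t_2,\infty)$, $t_f=\inf\{t\ge t_2: x_O(t)^2+(y_O(t)-y_T(t))^2>R^2\}$ and the observation time is $t_f-t_2$; $V(\lambda)$ is the supremum of $t_f-t_2$ over all controls. *)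

From HB Require Import structures.
From mathcomp Require Import all_boot all_order all_algebra.
From mathcomp Require Import all_classical all_reals all_analysis.
Set Implicit Arguments. Unset Strict Implicit. Unset Printing Implicit Defensive.
Import Order.TTheory GRing.Theory Num.Theory.
Local Open Scope classical_set_scope.
Local Open Scope ring_scope.

Section PhaseII.
Variable R : realType.

Definition obs_x (alpha x0 t2 : R) (psi : R -> R) (t : R) : R :=
  x0 + Rintegral lebesgue_measure `[t2, t] (fun s => alpha * cos (psi s)).
Definition obs_y (alpha y0 t2 : R) (psi : R -> R) (t : R) : R :=
  y0 + Rintegral lebesgue_measure `[t2, t] (fun s => alpha * sin (psi s)).

(* Target: (0, y_T(t)) with y_T(t2) = yT2 and dy_T/dt = 1. *)
Definition target_y (yT2 t2 t : R) : R := yT2 + (t - t2).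

(* Contact with bearing lam at time t2: observer at
   (R sin lam, y_T(t2) + R cos lam). t_f = inf {t >= t2 : outside disk}
   (+oo if the set is empty). *)
Definition exit_time (alpha Rr t2 yT2 lam : R) (psi : R -> R) : \bar R :=
  ereal_inf [set t%:E | t in [set t : R | t2 <= t /\
     Rr ^+ 2 < (obs_x alpha (Rr * sin lam) t2 psi t) ^+ 2
              + (obs_y alpha (yT2 + Rr * cos lam) t2 psi t - target_y yT2 t2 t) ^+ 2]].

Definition V (alpha Rr t2 yT2 lam : R) : \bar R :=
  ereal_sup [set (exit_time alpha Rr t2 yT2 lam psi - t2%:E)%E
            | psi in [set psi : R -> R | measurable_fun `[t2, +oo[ psi]].

End PhaseII.

From HB Require Import structures.
From mathcomp Require Import all_boot all_order all_algebra.
From mathcomp Require Import all_classical all_reals all_analysis.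
From mathcomp Require Import ring lra.
Set Implicit Arguments. Unset Strict Implicit. Unset Printing Implicit Defensive.
Import Order.TTheory GRing.Theory Num.Theory.
Import numFieldNormedType.Exports.
Local Open Scope ring_scope.

(* In the frame of the target the observer starts at [Rr (sin lam, cos lam)] on
   the circle and moves with velocity [alpha (cos psi, sin psi) - (0, 1)].  For a
   unit vector [a] with [a2 > alpha], the component of the relative position
   along [a] decreases at rate at least [a2 - alpha] and stays above [- Rr] while
   the observer is inside the disk; this bounds the observation time of every
   control.  Heading straight along the best such [a] attains the bound, whence
   [V lam = max 0 (2 Rr (alpha + cos lam) / (1 - alpha ^ 2))], a nondecreasing
   function of [cos lam]. *)

Lemma dot_geN_radius (R : realFieldType) (a1 a2 x1 x2 r : R) :
  0 < r -> a1 ^+ 2 + a2 ^+ 2 = 1 -> x1 ^+ 2 + x2 ^+ 2 <= r ^+ 2 ->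
  - r <= a1 * x1 + a2 * x2.
Proof.
move=> r_gt0 a_unit x_le.
have : (a1 * x1 + a2 * x2) ^+ 2 <= r ^+ 2.
  have := sqr_ge0 (a1 * x2 - a2 * x1); nra.
by case: leP => // ?; nra.
Qed.

Lemma outside_disk_line_ge (R : realFieldType) (r K tau u1 u2 v1 v2 : R) :
  u1 ^+ 2 + u2 ^+ 2 = 1 -> 0 <= tau ->
  K * (v1 ^+ 2 + v2 ^+ 2) + 2 * r * (u1 * v1 + u2 * v2) <= 0 ->
  r ^+ 2 < (r * u1 + tau * v1) ^+ 2 + (r * u2 + tau * v2) ^+ 2 -> K <= tau.
Proof.
move=> u_unit tau_ge0 hK; rewrite leNgt; apply: contraTN => tau_lt.
have -> : (r * u1 + tau * v1) ^+ 2 + (r * u2 + tau * v2) ^+ 2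
    = r ^+ 2 * (u1 ^+ 2 + u2 ^+ 2)
      + tau * (2 * r * (u1 * v1 + u2 * v2) + tau * (v1 ^+ 2 + v2 ^+ 2)) by ring.
rewrite u_unit mulr1 -leNgt gerDl mulr_ge0_le0 //.
have : tau * (v1 ^+ 2 + v2 ^+ 2) <= K * (v1 ^+ 2 + v2 ^+ 2).
  by rewrite ler_wpM2r ?addr_ge0 ?sqr_ge0 // ltW.
lra.
Qed.

Lemma unit_vector_angle (R : realType) (c s : R) :
  c ^+ 2 + s ^+ 2 = 1 -> 0 <= s -> exists ps, cos ps = c /\ sin ps = s.
Proof.
move=> cs_unit s_ge0; have c_itv : -1 <= c <= 1 by apply/andP; split; nra.
exists (acos c); rewrite acosK ?in_itv //; split => //.
by rewrite sin_acos // -cs_unit addrAC subrr add0r sqrtr_sqr ger0_norm.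
Qed.

Lemma dot_cos_sin_le1 (R : realType) (a1 a2 x : R) :
  a1 ^+ 2 + a2 ^+ 2 <= 1 -> a1 * cos x + a2 * sin x <= 1.
Proof.
move=> a_le1; have := cos2Dsin2 x.
have := sqr_ge0 (a1 - cos x); have := sqr_ge0 (a2 - sin x); nra.
Qed.

Section Integrals.
Local Open Scope classical_set_scope.
Variable R : realType.
Local Notation mu := (@lebesgue_measure R).

Lemma lebesgue_measure_itvcc_lty (a b : R) : (mu `[a, b] < +oo)%E.
Proof.
have := @lebesgue_measure_itv R `[a, b]%R; rewrite /= => ->.
by case: ifP => _; rewrite ?ltry // -EFinD ltry.
Qed.

Lemma Rintegral_itvcc_cst (a b c : R) : a <= b ->
  \int[mu]_(_ in `[a, b]) c = c * (b - a).
Proof.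
move=> ab; rewrite Rintegral_cst //.
have := @lebesgue_measure_itv R `[a, b]%R; rewrite /= => ->; rewrite lte_fin.
by case: ltgtP ab => // -> _; rewrite subrr.
Qed.

Lemma integrable_continuous_comp (h psi : R -> R) (M a b : R) :
  continuous h -> (forall x, `|h x| <= M) -> measurable_fun `[a, +oo[ psi ->
  mu.-integrable `[a, b] (EFin \o (h \o psi)).
Proof.
move=> ch hM mpsi; apply: measurable_bounded_integrable => //.
- exact: lebesgue_measure_itvcc_lty.
- apply: measurableT_comp.
    exact: measurable_realfun.continuous_measurable_fun.
  apply: measurable_funS mpsi => // x /=.
  by rewrite !in_itv /= andbT => /andP[].
- exists M; split; first exact: num_real.
  by move=> N MN x _; apply: le_trans (hM _) (ltW MN).
Qed.

Lemma heading_projection_le (alpha a1 a2 a b : R) (psi : R -> R) :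
  0 <= alpha -> a1 ^+ 2 + a2 ^+ 2 <= 1 -> measurable_fun `[a, +oo[ psi ->
  a <= b ->
  a1 * \int[mu]_(s in `[a, b]) (alpha * cos (psi s))
  + a2 * \int[mu]_(s in `[a, b]) (alpha * sin (psi s)) <= alpha * (b - a).
Proof.
move=> alpha_ge0 a_le1 mpsi ab.
have int_cos : mu.-integrable `[a, b] (EFin \o (fun s => alpha * cos (psi s))).
  exact: integrableZl
    (integrable_continuous_comp b (@continuous_cos R) (@cos_max R) mpsi).
have int_sin : mu.-integrable `[a, b] (EFin \o (fun s => alpha * sin (psi s))).
  exact: integrableZl
    (integrable_continuous_comp b (@continuous_sin R) (@sin_max R) mpsi).
have int_cst : mu.-integrable `[a, b] (EFin \o (fun=> alpha)).
  by have := integrable_continuous_comp b (@cst_continuous R R alpha)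
    (fun=> lexx _) mpsi.
rewrite -!RintegralZl // -RintegralD //; last first.
- exact: (integrableZl _ a2 int_sin).
- exact: (integrableZl _ a1 int_cos).
rewrite -Rintegral_itvcc_cst //; apply: le_Rintegral => //.
  exact: integrableD _ (integrableZl _ a1 int_cos) (integrableZl _ a2 int_sin).
move=> s _; rewrite mulrCA [a2 * _]mulrCA -mulrDr ler_piMr //.
exact: dot_cos_sin_le1.
Qed.

End Integrals.

Section PhaseII.
Local Open Scope classical_set_scope.
Variables (R : realType) (alpha Rr t2 yT2 : R).
Hypotheses (alpha_gt0 : 0 < alpha) (alpha_lt1 : alpha < 1) (Rr_gt0 : 0 < Rr).
Local Notation mu := (@lebesgue_measure R).

Definition outside_disk (lam : R) (psi : R -> R) (t : R) : Prop :=
  Rr ^+ 2 < (obs_x alpha (Rr * sin lam) t2 psi t) ^+ 2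
            + (obs_y alpha (yT2 + Rr * cos lam) t2 psi t - target_y yT2 t2 t) ^+ 2.

Lemma outside_diskE lam psi t : outside_disk lam psi t =
  (Rr ^+ 2 <
     (Rr * sin lam + \int[mu]_(s in `[t2, t]) (alpha * cos (psi s))) ^+ 2
     + (Rr * cos lam + \int[mu]_(s in `[t2, t]) (alpha * sin (psi s))
        - (t - t2)) ^+ 2).
Proof.
by rewrite /outside_disk /obs_x /obs_y /target_y; congr (_ < _ + _ ^+ 2); ring.
Qed.

Lemma V_le_of_outside lam c : 0 <= c ->
  (forall psi, measurable_fun `[t2, +oo[ psi ->
     forall t, t2 + c < t -> outside_disk lam psi t) ->
  (V alpha Rr t2 yT2 lam <= c%:E)%E.
Proof.
move=> c_ge0 out; apply: ub_ereal_sup => _ [psi mpsi <-].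
rewrite leeBlDr // -EFinD addrC; apply/lee_addgt0Pr => e e_gt0.
apply: ge_ereal_inf; exists (t2 + c + e)%:E; last by rewrite EFinD.
by exists (t2 + c + e) => //; split; [lra | apply: out => //; lra].
Qed.

Lemma V_ge_of_outside lam psi c : measurable_fun `[t2, +oo[ psi ->
  (forall t, t2 <= t -> outside_disk lam psi t -> t2 + c <= t) ->
  (c%:E <= V alpha Rr t2 yT2 lam)%E.
Proof.
move=> mpsi late; apply: le_trans (ereal_sup_ubound _); last by exists psi.
rewrite leeBrDr // -EFinD addrC.
by apply/ereal_infP => _ [t [t2t out] <-]; rewrite lee_fin late.
Qed.

Lemma outside_disk_of_direction lam psi a1 a2 K t :
  measurable_fun `[t2, +oo[ psi -> a1 ^+ 2 + a2 ^+ 2 = 1 -> alpha < a2 ->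
  Rr * (1 + a1 * sin lam + a2 * cos lam) <= K * (a2 - alpha) ->
  t2 + K < t -> outside_disk lam psi t.
Proof.
move=> mpsi a_unit a2_gt hK tK; rewrite outside_diskE.
have a_le1 : a1 ^+ 2 + a2 ^+ 2 <= 1 by rewrite a_unit.
have K_ge0 : 0 <= K.
  have dot_geN1 : 0 <= 1 + a1 * sin lam + a2 * cos lam.
    have := cos2Dsin2 lam; have := sqr_ge0 (a1 + sin lam).
    have := sqr_ge0 (a2 + cos lam); nra.
  have := le_trans (mulr_ge0 (ltW Rr_gt0) dot_geN1) hK.
  by rewrite pmulr_lge0 // subr_gt0.
have t2t : t2 <= t by lra.
have := heading_projection_le (ltW alpha_gt0) a_le1 mpsi t2t.
set X := \int[mu]_(s in _) _; set Y := \int[mu]_(s in _) _ => proj_le.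
set r1 := Rr * sin lam + X; set r2 := Rr * cos lam + Y - (t - t2).
rewrite ltNge; apply/negP => inside.
have proj_ge := dot_geN_radius Rr_gt0 a_unit inside.
have : a1 * r1 + a2 * r2
    = Rr * (a1 * sin lam + a2 * cos lam) + (a1 * X + a2 * Y) - a2 * (t - t2).
  by rewrite /r1 /r2; ring.
nra.
Qed.

(* The displacement [d] from the contact point has nonnegative component along
   the contact direction and negative vertical component, so
   [|Rr u + d| > Rr]. *)
Lemma outside_disk_at_once lam psi t : measurable_fun `[t2, +oo[ psi ->
  cos lam <= - alpha -> t2 < t -> outside_disk lam psi t.
Proof.
move=> mpsi cos_le t2t; rewrite outside_diskE.
have u_unit : (- sin lam) ^+ 2 + (- cos lam) ^+ 2 <= 1.
  by rewrite !sqrrN addrC cos2Dsin2.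
have e2_unit : 0 ^+ 2 + 1 ^+ 2 <= 1 :> R by rewrite expr0n add0r expr1n.
have := heading_projection_le (ltW alpha_gt0) e2_unit mpsi (ltW t2t).
have := heading_projection_le (ltW alpha_gt0) u_unit mpsi (ltW t2t).
set X := \int[mu]_(s in _) _; set Y := \int[mu]_(s in _) _ => proj_u proj_e2.
set tau := t - t2 in proj_u proj_e2 *; have tau_gt0 : 0 < tau by rewrite subr_gt0.
have ud_ge0 : 0 <= sin lam * X + cos lam * (Y - tau).
  have : 0 <= (- alpha - cos lam) * tau by apply: mulr_ge0; lra.
  lra.
have d2_lt0 : Y - tau < 0.
  have : alpha * tau < tau by rewrite gtr_pMl.
  lra.
have -> : (Rr * sin lam + X) ^+ 2 + (Rr * cos lam + Y - tau) ^+ 2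
    = Rr ^+ 2 * (cos lam ^+ 2 + sin lam ^+ 2)
      + 2 * Rr * (sin lam * X + cos lam * (Y - tau)) + X ^+ 2 + (Y - tau) ^+ 2.
  by ring.
have := mulr_ge0 (ltW Rr_gt0) ud_ge0.
have : 0 < (Y - tau) ^+ 2 by rewrite -sqrrN exprn_gt0 // oppr_gt0.
rewrite cos2Dsin2 mulr1; have := sqr_ge0 X; lra.
Qed.

Lemma const_heading_outside_ge lam ps K t :
  K * (alpha ^+ 2 - 2 * alpha * sin ps + 1)
    + 2 * Rr * (sin lam * (alpha * cos ps) + cos lam * (alpha * sin ps - 1)) <= 0 ->
  t2 <= t -> outside_disk lam (fun=> ps) t -> t2 + K <= t.
Proof.
move=> hK t2t; rewrite outside_diskE !Rintegral_itvcc_cst // -lerBrDl => out.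
have v_norm : (alpha * cos ps) ^+ 2 + (alpha * sin ps - 1) ^+ 2
    = alpha ^+ 2 - 2 * alpha * sin ps + 1.
  have -> : (alpha * cos ps) ^+ 2 + (alpha * sin ps - 1) ^+ 2
      = alpha ^+ 2 * (cos ps ^+ 2 + sin ps ^+ 2) - 2 * alpha * sin ps + 1 by ring.
  by rewrite cos2Dsin2 mulr1.
apply: (@outside_disk_line_ge _ Rr K (t - t2) (sin lam) (cos lam)
  (alpha * cos ps) (alpha * sin ps - 1)).
- by rewrite addrC cos2Dsin2.
- by rewrite subr_ge0.
- by rewrite v_norm.
- by move: out; congr (_ < _ ^+ 2 + _ ^+ 2); ring.
Qed.

Lemma one_sub_alpha_sqr_gt0 : 0 < 1 - alpha ^+ 2.
Proof. by rewrite subr_gt0 expr_lt1 // ltW. Qed.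

Definition phase2_time (c : R) : R := 2 * Rr * (alpha + c) / (1 - alpha ^+ 2).

(* [a = (cos ps, sin ps)] is the exit point of the straight path with heading
   [a], reflected through the centre and scaled to the unit circle: this makes
   both inequalities in [outside_disk_of_direction] tight. *)
Lemma optimal_heading lam : - alpha < cos lam ->
  exists ps, [/\ alpha < sin ps,
    Rr * (1 + cos ps * sin lam + sin ps * cos lam)
      = phase2_time (cos lam) * (sin ps - alpha) &
    phase2_time (cos lam) * (alpha ^+ 2 - 2 * alpha * sin ps + 1)
      + 2 * Rr * (sin lam * (alpha * cos ps) + cos lam * (alpha * sin ps - 1)) = 0].
Proof.
move=> cos_gt.
have xy_unit : sin lam ^+ 2 + cos lam ^+ 2 - 1 = 0.
  by apply/eqP; rewrite subr_eq0 addrC cos2Dsin2.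
set x := sin lam in xy_unit *; set y := cos lam in cos_gt xy_unit *.
set D := 1 + 2 * alpha * y + alpha ^+ 2.
have D_gt0 : 0 < D by rewrite /D; nra.
have Dn0 : D != 0 by rewrite gt_eqF.
have An0 : 1 - alpha ^+ 2 != 0 by rewrite gt_eqF ?one_sub_alpha_sqr_gt0.
set a1 := - x * (1 - alpha ^+ 2) / D.
set a2 := (y * (1 + alpha ^+ 2) + 2 * alpha) / D.
have a2_gt : alpha < a2.
  have -> : a2 = alpha + (1 - alpha ^+ 2) * (y + alpha) / D.
    by rewrite /a2 /D; field.
  by rewrite ltrDl divr_gt0 // mulr_gt0 ?one_sub_alpha_sqr_gt0 //; lra.
have [ps [cos_ps sin_ps]] : exists ps, cos ps = a1 /\ sin ps = a2.
  apply: unit_vector_angle; last by apply: le_trans (ltW a2_gt); exact: ltW.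
  apply/eqP; rewrite -subr_eq0.
  have -> : a1 ^+ 2 + a2 ^+ 2 - 1
      = (1 - alpha ^+ 2) ^+ 2 / D ^+ 2 * (x ^+ 2 + y ^+ 2 - 1).
    by rewrite /a1 /a2 /D; field.
  by rewrite xy_unit mulr0.
exists ps; rewrite cos_ps sin_ps /phase2_time; split => //.
- apply/eqP; rewrite -subr_eq0.
  have -> : Rr * (1 + a1 * x + a2 * y)
        - 2 * Rr * (alpha + y) / (1 - alpha ^+ 2) * (a2 - alpha)
      = - Rr * (1 - alpha ^+ 2) / D * (x ^+ 2 + y ^+ 2 - 1).
    by rewrite /a1 /a2 /D; field; rewrite Dn0 An0.
  by rewrite xy_unit mulr0.
- have -> : 2 * Rr * (alpha + y) / (1 - alpha ^+ 2)
        * (alpha ^+ 2 - 2 * alpha * a2 + 1)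
      + 2 * Rr * (x * (alpha * a1) + y * (alpha * a2 - 1))
      = - 2 * Rr * alpha * (1 - alpha ^+ 2) / D * (x ^+ 2 + y ^+ 2 - 1).
    by rewrite /a1 /a2 /D; field; rewrite Dn0 An0.
  by rewrite xy_unit mulr0.
Qed.

Lemma V_closed_form lam :
  V alpha Rr t2 yT2 lam = (Num.max 0 (phase2_time (cos lam)))%:E.
Proof.
have timeE c : phase2_time c = (alpha + c) * (2 * Rr / (1 - alpha ^+ 2)).
  by rewrite /phase2_time; ring.
have scale_gt0 : 0 < 2 * Rr / (1 - alpha ^+ 2).
  by rewrite divr_gt0 ?mulr_gt0 ?one_sub_alpha_sqr_gt0.
have [cos_le|cos_gt] := leP (cos lam) (- alpha).
- have -> : Num.max 0 (phase2_time (cos lam)) = 0.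
    by apply/max_idPl; rewrite timeE; apply: mulr_le0_ge0; [lra | exact: ltW].
  apply/le_anti/andP; split.
    apply: V_le_of_outside => // psi mpsi t; rewrite addr0.
    exact: outside_disk_at_once.
  apply: (@V_ge_of_outside _ (fun=> 0)) => [|t t2t _].
    exact: measurable_cst.
  by rewrite addr0.
- have [ps [sin_gt proj_eq exit_eq]] := optimal_heading cos_gt.
  have time_ge0 : 0 <= phase2_time (cos lam).
    by rewrite timeE; apply: mulr_ge0; [lra | exact: ltW].
  rewrite (max_idPr time_ge0); apply/le_anti/andP; split.
    apply: V_le_of_outside => // psi mpsi t.
    apply: (outside_disk_of_direction (a1 := cos ps) (a2 := sin ps)) => //.
      exact: cos2Dsin2.
    by rewrite proj_eq.
  apply: (@V_ge_of_outside _ (fun=> ps)) => [|t]; first exact: measurable_cst.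
  by apply: const_heading_outside_ge; rewrite exit_eq.
Qed.

Lemma phase2_time_nondecreasing : {homo phase2_time : c1 c2 / c1 <= c2}.
Proof.
move=> c1 c2 c12; rewrite /phase2_time ler_pM2r ?invr_gt0 ?one_sub_alpha_sqr_gt0 //.
by rewrite ler_pM2l ?mulr_gt0 // lerD2l.
Qed.

End PhaseII.

Lemma cos_le_antimono (R : realType) :
  {in `[0, pi] &, forall a b : R, a <= b -> cos b <= cos a}.
Proof. by move=> a b a_itv b_itv ab; rewrite leNgt ltr_cos // -leNgt. Qed.

Theorem lemma3 (R : realType) (alpha Rr : R) :
  0 < alpha < 1 -> 0 < Rr ->
  forall t2 yT2 : R,
    {in `[- pi, 0] &, forall a b : R, a <= b ->
        (V alpha Rr t2 yT2 a <= V alpha Rr t2 yT2 b)%E} /\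
    {in `[0, pi] &, forall a b : R, a <= b ->
        (V alpha Rr t2 yT2 b <= V alpha Rr t2 yT2 a)%E} /\
    (forall lam : R, lam \in `[- pi, pi] ->
        (V alpha Rr t2 yT2 lam <= V alpha Rr t2 yT2 0)%E).
Proof.
move=> /andP[alpha_gt0 alpha_lt1] Rr_gt0 t2 yT2.
have V_le a b : cos a <= cos b -> (V alpha Rr t2 yT2 a <= V alpha Rr t2 yT2 b)%E.
  move=> cos_ab; rewrite !V_closed_form // lee_fin le_max2 //.
  exact: phase2_time_nondecreasing.
split; [|split].
- move=> a b; rewrite !in_itv /= => /andP[a_ge a_le] /andP[b_ge b_le] ab.
  apply: V_le; rewrite -(cosN a) -(cosN b).
  by apply: cos_le_antimono; rewrite ?in_itv /= ?lerN2 //; apply/andP; split; lra.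
- by move=> a b a_itv b_itv ab; apply: V_le; exact: cos_le_antimono.
- by move=> lam _; apply: V_le; rewrite cos0 cos_le1.
Qed.
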